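(* For every integer $n>0$, $\mathrm{DE1}(n)+\mathrm{DE1}(n-1)$ equals the number of partitions of $n$ into parts none of which is divisible by $4$.
   Context: For a nonnegative integer $n$, $\mathrm{DE1}(n)$ denotes the number of partitions of $n$ in which no even part is repeated and the largest part is odd (so the empty partition is not counted and $\mathrm{DE1}(0)=0$). Equivalently, $\sum_{n\ge0}\mathrm{DE1}(n)q^n=\sum_{n\ge0}\frac{(-q^2;q^2)_n q^{2n+1}}{(q;q^2)_{n+1}}$, where $(a;q)_n=\prod_{j=0}^{n-1}(1-aq^j)$. *)

From mathcomp Require Import all_boot.
Set Implicit Arguments. Unset Strict Implicit. Unset Printing Implicit Defensive.

(* A partition of n is encoded by its multiplicity function:
   m k = number of times the part k occurs (1 <= k <= n).
   Multiplicities are at most n, so 'I_n.+1 suffices; part 0 is forbidden. *)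
Definition mult_partition (n : nat) (m : {ffun 'I_n.+1 -> 'I_n.+1}) : bool :=
  (m ord0 == 0 :> nat) && (\sum_(k < n.+1) k * m k == n).

Definition no_even_repeated (n : nat) (m : {ffun 'I_n.+1 -> 'I_n.+1}) : bool :=
  [forall k : 'I_n.+1, ~~ odd k ==> (m k <= 1)].

Definition largest_part_odd (n : nat) (m : {ffun 'I_n.+1 -> 'I_n.+1}) : bool :=
  [exists k : 'I_n.+1, [&& 0 < m k, odd k &
     [forall j : 'I_n.+1, (k < j) ==> (m j == 0 :> nat)]]].

Definition no_part_div4 (n : nat) (m : {ffun 'I_n.+1 -> 'I_n.+1}) : bool :=
  [forall k : 'I_n.+1, (4 %| k) ==> (m k == 0 :> nat)].

Definition DE1 (n : nat) : nat :=
  #|[set m : {ffun 'I_n.+1 -> 'I_n.+1} |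
       [&& mult_partition m, no_even_repeated m & largest_part_odd m]]|.

Definition p_no4 (n : nat) : nat :=
  #|[set m : {ffun 'I_n.+1 -> 'I_n.+1} | mult_partition m && no_part_div4 m]|.

(* Adding 1 to one copy of the largest part maps the partitions counted by
   DE1(n-1) bijectively onto the partitions of n with no repeated even part whose
   largest part is even (that part then occurs once); the inverse subtracts 1
   from the largest part. Together with DE1(n), which counts those with odd
   largest part, DE1(n) + DE1(n-1) counts all partitions of n with no repeated
   even part. These are in bijection with the partitions of n with no part
   divisible by 4 (Glaisher's argument): odd parts are kept, and for each odd b
   the distinct parts 2^(i+1) b are merged into m copies of the part 2b, where
   the binary digits of m record which of them occur. *)

From mathcomp Require Import all_boot zify.
From Stdlib Require Import FunctionalExtensionality.
Set Implicit Arguments. Unset Strict Implicit. Unset Printing Implicit Defensive.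

Definition mult_of n (m : {ffun 'I_n.+1 -> 'I_n.+1}) (k : nat) : nat :=
  if k < n.+1 then m (inord k) : nat else 0.

Definition ffun_of n (g : nat -> nat) : {ffun 'I_n.+1 -> 'I_n.+1} :=
  [ffun k : 'I_n.+1 => inord (g k)].

Definition supported n (g : nat -> nat) := forall k, n < k -> g k = 0.

(* Exactly the multiplicity functions [mult_of m] of some [m]; see [ffun_ofK]. *)
Definition bounded n (g : nat -> nat) := supported n g /\ forall k, g k <= n.

Lemma mult_of_ord n (m : {ffun 'I_n.+1 -> 'I_n.+1}) (k : 'I_n.+1) :
  mult_of m k = m k.
Proof. by rewrite /mult_of ltn_ord inord_val. Qed.

Lemma mult_ofK n : cancel (@mult_of n) (ffun_of n).
Proof.
by move=> m; apply/ffunP=> k; apply: val_inj; rewrite ffunE mult_of_ord inord_val.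
Qed.

Lemma mult_of_bounded n (m : {ffun 'I_n.+1 -> 'I_n.+1}) : bounded n (mult_of m).
Proof.
split=> k; rewrite /mult_of; first by move=> lt_nk; rewrite ltnNge lt_nk.
by case: ifP => // _; rewrite -ltnS.
Qed.

Lemma ffun_ofK n g : bounded n g -> mult_of (ffun_of n g) = g.
Proof.
move=> [supp_g le_g]; apply: functional_extensionality => k; rewrite /mult_of.
case: ltnP => [lt_kn | le_nk]; last exact/esym/supp_g.
by rewrite ffunE !inordK // ltnS.
Qed.

Definition count_mult n (P : (nat -> nat) -> bool) :=
  #|[set m : {ffun 'I_n.+1 -> 'I_n.+1} | P (mult_of m)]|.

Lemma leq_count_mult n1 n2 (P1 P2 : (nat -> nat) -> bool)
    (F G : (nat -> nat) -> nat -> nat) :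
  (forall g, bounded n1 g -> P1 g -> bounded n2 (F g) /\ P2 (F g)) ->
  (forall g, bounded n1 g -> P1 g -> G (F g) = g) ->
  count_mult n1 P1 <= count_mult n2 P2.
Proof.
move=> F_ok FK; pose f (m : {ffun 'I_n1.+1 -> 'I_n1.+1}) := ffun_of n2 (F (mult_of m)).
have f_inj : {in [set m | P1 (mult_of m)] &, injective f}.
  move=> x y; rewrite !inE => P1x P1y /(congr1 (@mult_of n2)).
  have [bFx _] := F_ok _ (mult_of_bounded x) P1x.
  have [bFy _] := F_ok _ (mult_of_bounded y) P1y.
  rewrite !ffun_ofK // => /(congr1 G).
  rewrite (FK _ (mult_of_bounded x) P1x) (FK _ (mult_of_bounded y) P1y).
  by move/(can_inj (@mult_ofK n1)).
rewrite /count_mult -(card_in_imset f_inj); apply/subset_leq_card/subsetP => y.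
case/imsetP=> m; rewrite inE => P1m ->.
have [bFm P2Fm] := F_ok _ (mult_of_bounded m) P1m.
by rewrite inE /f ffun_ofK.
Qed.

Lemma count_mult_bij n1 n2 (P1 P2 : (nat -> nat) -> bool)
    (F G : (nat -> nat) -> nat -> nat) :
  (forall g, bounded n1 g -> P1 g -> bounded n2 (F g) /\ P2 (F g)) ->
  (forall h, bounded n2 h -> P2 h -> bounded n1 (G h) /\ P1 (G h)) ->
  (forall g, bounded n1 g -> P1 g -> G (F g) = g) ->
  (forall h, bounded n2 h -> P2 h -> F (G h) = h) ->
  count_mult n1 P1 = count_mult n2 P2.
Proof.
move=> F_ok G_ok FK GK; apply/eqP; rewrite eqn_leq.
by rewrite (leq_count_mult F_ok FK) (leq_count_mult G_ok GK).
Qed.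

Lemma count_mult_split n (P Q : (nat -> nat) -> bool) :
  count_mult n (fun g => P g && Q g) + count_mult n (fun g => P g && ~~ Q g) =
  count_mult n P.
Proof.
rewrite /count_mult -[RHS](cardsID [set m | Q (mult_of m)]).
by congr (_ + _); apply: eq_card => m; rewrite !inE andbC.
Qed.

Lemma sum_widen_supported (F : nat -> nat) n N :
  (forall k, n < k -> F k = 0) -> n < N -> \sum_(k < N) F k = \sum_(k < n.+1) F k.
Proof.
move=> F0 lt_nN; rewrite [RHS](big_ord_widen _ F lt_nN) [RHS]big_mkcond /=.
by apply: eq_bigr => k _; case: ltnP => // /F0.
Qed.

Definition weight N (g : nat -> nat) := \sum_(k < N) k * g k.

Definition is_partition n g := (g 0 == 0) && (weight n.+1 g == n).

Definition distinct_even_parts n (g : nat -> nat) :=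
  [forall k : 'I_n.+1, ~~ odd k ==> (g k <= 1)].

Definition odd_largest_part n (g : nat -> nat) :=
  [exists k : 'I_n.+1, [&& 0 < g k, odd k &
     [forall j : 'I_n.+1, (k < j) ==> (g j == 0)]]].

Definition no_part_mult4 n (g : nat -> nat) :=
  [forall k : 'I_n.+1, (4 %| k) ==> (g k == 0)].

Definition de_partition n g := is_partition n g && distinct_even_parts n g.

Definition no4_partition n g := is_partition n g && no_part_mult4 n g.

Lemma is_partition_mult_of n (m : {ffun 'I_n.+1 -> 'I_n.+1}) :
  is_partition n (mult_of m) = mult_partition m.
Proof.
rewrite /is_partition /mult_partition /weight -(mult_of_ord m ord0).
by under eq_bigr => k _ do rewrite mult_of_ord.
Qed.

Lemma DE1E n :
  DE1 n = count_mult n (fun g => de_partition n g && odd_largest_part n g).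
Proof.
apply: eq_card => m; rewrite !inE /de_partition is_partition_mult_of -andbA.
congr [&& _, _ & _]; first by apply: eq_forallb => k; rewrite mult_of_ord.
apply: eq_existsb => k; rewrite mult_of_ord; congr [&& _, _ & _].
by apply: eq_forallb => j; rewrite mult_of_ord.
Qed.

Lemma p_no4E n : p_no4 n = count_mult n (no4_partition n).
Proof.
apply: eq_card => m; rewrite !inE /no4_partition is_partition_mult_of.
by congr (_ && _); apply: eq_forallb => k; rewrite mult_of_ord.
Qed.

Lemma supported_le n g k : supported n g -> 0 < g k -> k <= n.
Proof. by move=> supp_g gk_gt0; rewrite leqNgt; apply: contraTN gk_gt0 => /supp_g ->. Qed.

Lemma weight_widen n N g : supported n g -> n < N -> weight N g = weight n.+1 g.
Proof.
move=> supp_g; apply: (@sum_widen_supported (fun k => k * g k)) => k /supp_g ->.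
exact: muln0.
Qed.

Lemma part_weight_le n g k : supported n g -> is_partition n g -> k * g k <= n.
Proof.
move=> supp_g /andP[_ /eqP <-]; case: (ltnP n k) => [/supp_g -> | le_kn].
  by rewrite muln0.
by rewrite /weight (bigD1 (Ordinal (le_kn : k < n.+1))) //= leq_addr.
Qed.

Lemma partition_bounded n g : supported n g -> is_partition n g -> bounded n g.
Proof.
move=> supp_g part_g; split=> // -[|k]; first by case/andP: part_g => /eqP ->.
exact: leq_trans (leq_pmull _ _) (part_weight_le k.+1 supp_g part_g).
Qed.

Lemma partition_pos_part n g : 0 < n -> is_partition n g -> exists k, 0 < g k.
Proof.
move=> n_gt0 /andP[_ /eqP wg]; have : weight n.+1 g != 0 by rewrite wg -lt0n.
rewrite /weight sum_nat_eq0 negb_forall => /existsP[k].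
by rewrite muln_eq0 negb_or -!lt0n => /andP[_ gk_gt0]; exists k.
Qed.

Lemma weight_fwith N g a v :
  a < N -> weight N (fwith a v g) + a * g a = weight N g + a * v.
Proof.
move=> lt_aN; rewrite /weight (bigD1 (Ordinal lt_aN)) //.
rewrite [in RHS](bigD1 (Ordinal lt_aN)) //= eqxx.
rewrite (eq_bigr (fun k : 'I_N => k * g k)); first by lia.
by move=> k; rewrite -val_eqE /= => /negbTE ->.
Qed.

Lemma distinct_even_partsP n g : supported n g ->
  reflect (forall k, ~~ odd k -> g k <= 1) (distinct_even_parts n g).
Proof.
move=> supp_g; apply: (iffP forallP) => [le_g k even_k | le_g k].
  case: (ltnP n k) => [/supp_g -> // | le_kn].
  exact: implyP (le_g (Ordinal (le_kn : k < n.+1))) even_k.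
exact/implyP/le_g.
Qed.

Lemma no_part_mult4P n g : supported n g ->
  reflect (forall k, 4 %| k -> g k = 0) (no_part_mult4 n g).
Proof.
move=> supp_g; apply: (iffP forallP) => [g0 k dvd4k | g0 k].
  case: (ltnP n k) => [/supp_g -> // | le_kn].
  exact/eqP/(implyP (g0 (Ordinal (le_kn : k < n.+1)))).
by apply/implyP => /g0 ->.
Qed.

Definition largest_part (g : nat -> nat) K := 0 < g K /\ forall j, K < j -> g j = 0.

Fixpoint max_part (g : nat -> nat) N :=
  if N is N'.+1 then (if 0 < g N' then N' else max_part g N') else 0.

Lemma largest_part_supported n g K : largest_part g K -> K <= n -> supported n g.
Proof. by move=> [_ topK] le_Kn j lt_nj; apply/topK/(leq_ltn_trans le_Kn). Qed.

Lemma largest_part_uniq g K1 K2 : largest_part g K1 -> largest_part g K2 -> K1 = K2.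
Proof.
move=> [g1_gt0 top1] [g2_gt0 top2]; case: (ltngtP K1 K2) => // [/top1 | /top2] g0.
  by rewrite g0 in g2_gt0.
by rewrite g0 in g1_gt0.
Qed.

Lemma max_partE g N K : largest_part g K -> K < N -> max_part g N = K.
Proof.
move=> [gK_gt0 topK]; elim: N => [//|N IHN]; rewrite ltnS leq_eqVlt /=.
by case/orP=> [/eqP <- | lt_KN]; [rewrite gK_gt0 | rewrite topK // IHN].
Qed.

Lemma exists_largest_part n g k :
  supported n g -> 0 < g k -> exists K, largest_part g K.
Proof.
move=> supp_g gk_gt0.
have [K gK_gt0 maxK] := ex_maxnP (ex_intro (fun j => 0 < g j) k gk_gt0)
                                 (fun j => supported_le supp_g).
exists K; split=> // j lt_Kj; apply/eqP; rewrite -leqn0 leqNgt.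
by apply: contraTN lt_Kj => /maxK; rewrite -leqNgt.
Qed.

Lemma odd_largest_partP n g : supported n g ->
  reflect (exists2 K, largest_part g K & odd K) (odd_largest_part n g).
Proof.
move=> supp_g; apply: (iffP existsP) => [[k /and3P[gk_gt0 odd_k /forallP top_k]] |].
  exists (k : nat) => //; split=> // j lt_kj.
  case: (ltnP n j) => [/supp_g // | le_jn].
  by apply/eqP/(implyP (top_k (Ordinal (le_jn : j < n.+1)))).
move=> [K [gK_gt0 topK] odd_K]; have le_Kn := supported_le supp_g gK_gt0.
exists (Ordinal (le_Kn : K < n.+1)); rewrite /= gK_gt0 odd_K.
by apply/forallP => j; apply/implyP => /topK ->.
Qed.

Lemma odd_largest_partE n g K :
  supported n g -> largest_part g K -> odd_largest_part n g = odd K.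
Proof.
move=> supp_g topK; apply/(odd_largest_partP supp_g)/idP => [[K' topK'] | odd_K].
  by rewrite (largest_part_uniq topK topK').
by exists K.
Qed.

Lemma even_largest_part_single n h : 0 < n -> supported n h -> de_partition n h ->
  ~~ odd_largest_part n h -> exists K, [/\ largest_part h K.+1, h K.+1 = 1 & odd K].
Proof.
move=> n_gt0 supp_h /andP[part_h de_h] not_odd.
have [k hk_gt0] := partition_pos_part n_gt0 part_h.
have [K topK] := exists_largest_part supp_h hk_gt0.
rewrite (odd_largest_partE supp_h topK) in not_odd.
case: K topK not_odd => [|K] [hK_gt0 topK] /= even_K.
  by case/andP: part_h => /eqP h0; rewrite h0 in hK_gt0.
exists K; split; [by [] | apply/eqP | exact: negbNE].
by rewrite eqn_leq hK_gt0 (distinct_even_partsP supp_h de_h).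
Qed.

Definition raise_part K (g : nat -> nat) : nat -> nat :=
  fwith K.+1 1 (fwith K (g K).-1 g).

Definition lower_part K (h : nat -> nat) : nat -> nat :=
  fwith K (h K).+1 (fwith K.+1 0 h).

Lemma raise_largest g K : largest_part g K -> largest_part (raise_part K g) K.+1.
Proof.
move=> [_ topK]; rewrite /raise_part; split=> [|j lt_Kj] /=; first by rewrite eqxx.
by rewrite !gtn_eqF ?topK // ltnW.
Qed.

Lemma lower_largest h K : largest_part h K.+1 -> largest_part (lower_part K h) K.
Proof.
move=> [_ topK]; rewrite /lower_part; split=> [|j lt_Kj] /=; first by rewrite eqxx.
rewrite gtn_eqF //; case: eqP => // /eqP neq_jK1.
by rewrite topK // ltn_neqAle eq_sym neq_jK1.
Qed.

Lemma lower_raise g K : largest_part g K -> lower_part K (raise_part K g) = g.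
Proof.
move=> [gK_gt0 topK]; apply: functional_extensionality => k.
rewrite /lower_part /raise_part /= (ltn_eqF (ltnSn K)) eqxx prednK //.
case: eqP => [-> // | _]; case: eqP => // ->; exact/esym/topK.
Qed.

Lemma raise_lower h K : h K.+1 = 1 -> raise_part K (lower_part K h) = h.
Proof.
move=> hK1; apply: functional_extensionality => k.
rewrite /lower_part /raise_part /= eqxx.
by case: eqP => [-> // | _]; case: eqP => [-> |].
Qed.

Lemma weight_raise N g K :
  0 < g K -> g K.+1 = 0 -> K.+1 < N -> weight N (raise_part K g) = (weight N g).+1.
Proof.
move=> gK_gt0 gK1 lt_K1N.
have := weight_fwith (fwith K (g K).-1 g) 1 lt_K1N.
have := weight_fwith g (g K).-1 (ltnW lt_K1N).
rewrite /= (gtn_eqF (ltnSn K)) gK1 -/(raise_part K g) -{2}(prednK gK_gt0).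
lia.
Qed.

Lemma raise_de_partition p g K : supported p g -> de_partition p g ->
  largest_part g K -> odd K -> de_partition p.+1 (raise_part K g).
Proof.
move=> supp_g /andP[/andP[/eqP g0 /eqP wg] de_g] topK odd_K.
have [gK_gt0 topK'] := topK; have le_Kp := supported_le supp_g gK_gt0.
have supp_r := largest_part_supported (n := p.+1) (raise_largest topK) le_Kp.
have K_neq0 : 0 != K by apply: contraTneq odd_K => <-.
have r0 : raise_part K g 0 == 0 by rewrite /raise_part /= (negbTE K_neq0) g0.
have wr : weight p.+2 (raise_part K g) == p.+1.
  rewrite (weight_raise gK_gt0 (topK' _ (ltnSn K)) (le_Kp : K.+1 < p.+2)).
  by rewrite (weight_widen supp_g) // wg.
have de_r : distinct_even_parts p.+1 (raise_part K g).
  apply/(distinct_even_partsP supp_r) => k even_k; rewrite /raise_part /=.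
  case: eqP => // _; case: eqP => [eq_kK | _]; first by rewrite eq_kK odd_K in even_k.
  exact: (distinct_even_partsP supp_g de_g).
by rewrite /de_partition /is_partition r0 wr de_r.
Qed.

Lemma lower_de_partition p h K : supported p.+1 h -> de_partition p.+1 h ->
  largest_part h K.+1 -> h K.+1 = 1 -> odd K -> de_partition p (lower_part K h).
Proof.
move=> supp_h /andP[/andP[/eqP h0 /eqP wh] de_h] topK1 hK1 odd_K.
have le_Kp : K <= p := supported_le supp_h topK1.1.
have [lK_gt0 topK] := lower_largest topK1.
have supp_l := largest_part_supported (lower_largest topK1) le_Kp.
have K_neq0 : 0 != K by apply: contraTneq odd_K => <-.
have l0 : lower_part K h 0 == 0 by rewrite /lower_part /= (negbTE K_neq0) h0.
have wl : weight p.+1 (lower_part K h) == p.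
  move: wh; rewrite -{1}(raise_lower hK1) -(weight_widen supp_l (ltnW (ltnSn p.+1))).
  by rewrite (weight_raise lK_gt0 (topK _ (ltnSn K)) (le_Kp : K.+1 < p.+2)) => -[->].
have de_l : distinct_even_parts p (lower_part K h).
  apply/(distinct_even_partsP supp_l) => k even_k; rewrite /lower_part /=.
  case: eqP => [eq_kK | _]; first by rewrite eq_kK odd_K in even_k.
  by case: eqP => // _; apply: (distinct_even_partsP supp_h de_h).
by rewrite /de_partition /is_partition l0 wl de_l.
Qed.

Lemma count_odd_largest_part p :
  count_mult p (fun g => de_partition p g && odd_largest_part p g) =
  count_mult p.+1 (fun h => de_partition p.+1 h && ~~ odd_largest_part p.+1 h).
Proof.
apply: (count_mult_bij (F := fun g => raise_part (max_part g p.+1) g)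
                       (G := fun h => lower_part (max_part h p.+2).-1 h)).
- move=> g [supp_g _] /andP[de_g /(odd_largest_partP supp_g)[K topK odd_K]].
  have le_Kp := supported_le supp_g topK.1.
  have top_r := raise_largest topK.
  have supp_r := largest_part_supported (n := p.+1) top_r le_Kp.
  have de_r := raise_de_partition supp_g de_g topK odd_K.
  rewrite (max_partE topK) // de_r (odd_largest_partE supp_r top_r) /= odd_K.
  by case/andP: de_r => part_r _; split; first exact: partition_bounded.
- move=> h [supp_h _] /andP[de_h /(even_largest_part_single (ltn0Sn p) supp_h de_h)].
  case=> K [topK hK1 odd_K]; have le_Kp : K <= p := supported_le supp_h topK.1.
  have top_l := lower_largest topK.
  have supp_l := largest_part_supported top_l le_Kp.
  have de_l := lower_de_partition supp_h de_h topK hK1 odd_K.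
  rewrite (max_partE topK) //= de_l (odd_largest_partE supp_l top_l) odd_K.
  by case/andP: de_l => part_l _; split; first exact: partition_bounded.
- move=> g [supp_g _] /andP[de_g /(odd_largest_partP supp_g)[K topK odd_K]].
  have le_Kp := supported_le supp_g topK.1.
  by rewrite (max_partE topK) // (max_partE (raise_largest topK)) //= lower_raise.
- move=> h [supp_h _] /andP[de_h /(even_largest_part_single (ltn0Sn p) supp_h de_h)].
  case=> K [topK hK1 odd_K]; have le_Kp : K <= p := supported_le supp_h topK.1.
  by rewrite (max_partE topK) // succnK (max_partE (lower_largest topK)) // raise_lower.
Qed.

Definition bit i x := x %/ 2 ^ i %% 2.

Lemma bitS i x : bit i.+1 x = bit i x./2.
Proof. by rewrite /bit expnS divnMA -divn2. Qed.

Lemma bit_small i x : x < 2 ^ i -> bit i x = 0.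
Proof. by move=> lt_x; rewrite /bit divn_small. Qed.

Lemma sum_pow2_recl T (c : nat -> nat) :
  \sum_(j < T.+1) 2 ^ j * c j = c 0 + 2 * \sum_(j < T) 2 ^ j * c j.+1.
Proof.
rewrite big_ord_recl /= expn0 mul1n big_distrr /=.
by congr (_ + _); apply: eq_bigr => j _; rewrite /bump /= add1n expnS mulnA.
Qed.

Lemma sum_bits T x : x < 2 ^ T -> \sum_(i < T) 2 ^ i * bit i x = x.
Proof.
elim: T x => [|T IHT] x lt_x; first by rewrite big_ord0; move: lt_x; rewrite expn0; lia.
rewrite (sum_pow2_recl _ (bit^~ x)) /=.
under eq_bigr => i _ do rewrite bitS.
rewrite IHT; first by rewrite /bit expn0 divn1; lia.
by rewrite -divn2 ltn_divLR // -expnSr.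
Qed.

Lemma binary_lt T (c : nat -> nat) : (forall j, c j <= 1) ->
  \sum_(j < T) 2 ^ j * c j < 2 ^ T.
Proof.
elim: T c => [|T IHT] c le_c1; first by rewrite big_ord0.
rewrite sum_pow2_recl expnS; have := IHT _ (fun j => le_c1 j.+1); have := le_c1 0.
lia.
Qed.

Lemma bit_binary T (c : nat -> nat) i : (forall j, c j <= 1) -> i < T ->
  bit i (\sum_(j < T) 2 ^ j * c j) = c i.
Proof.
elim: T c i => [//|T IHT] c i le_c1 lt_iT; rewrite sum_pow2_recl; have := le_c1 0.
case: i lt_iT => [_ | i lt_iT] le_c01; first by rewrite /bit expn0 divn1; lia.
rewrite bitS -(IHT (fun j => c j.+1)) // -divn2; congr (bit i _).
set S := \sum_(j < T) _; lia.
Qed.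

Lemma sum_parity_split (F : nat -> nat) M :
  \sum_(j < M.*2) F j = \sum_(j < M) F j.*2 + \sum_(j < M) F j.*2.+1.
Proof.
elim: M => [|M IHM]; first by rewrite !big_ord0.
rewrite doubleS !big_ord_recr /= IHM.
by rewrite -!addnA; congr (_ + _); rewrite addnCA.
Qed.

Lemma pow2_mul2 i x : 2 ^ i * (2 * x) = 2 ^ i.+1 * x.
Proof. by rewrite mulnA -expnSr. Qed.

Lemma sum_2adic (F : nat -> nat) n T :
  F 0 = 0 -> (forall k, n < k -> F k = 0) -> n < 2 ^ T ->
  \sum_(k < n.+1) F k = \sum_(i < T) \sum_(j < n.+1) F (2 ^ i * j.*2.+1).
Proof.
move=> F0 Fn lt_n2T.
have F2n i j : n < j -> F (2 ^ i * j) = 0.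
  by move=> lt_nj; apply/Fn/(leq_trans lt_nj)/leq_pmull; rewrite expn_gt0.
have split_odd i : \sum_(j < n.+1) F (2 ^ i * j) =
    \sum_(j < n.+1) F (2 ^ i * j.*2.+1) + \sum_(j < n.+1) F (2 ^ i.+1 * j).
  rewrite -(sum_widen_supported (F2n i) (_ : n < n.+1.*2)); last by rewrite -addnn; lia.
  rewrite (sum_parity_split (fun j => F (2 ^ i * j))) addnC; congr (_ + _).
  by apply: eq_bigr => j _; rewrite -mul2n pow2_mul2.
have peel T' : \sum_(k < n.+1) F k =
    \sum_(i < T') \sum_(j < n.+1) F (2 ^ i * j.*2.+1) + \sum_(j < n.+1) F (2 ^ T' * j).
  elim: T' => [|T' IHT']; first by rewrite big_ord0; under [RHS]eq_bigr do rewrite mul1n.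
  by rewrite IHT' split_odd [in RHS]big_ord_recr addnA.
rewrite (peel T) [X in _ + X]big1 ?addn0 // => -[[|j] _] /=; first by rewrite muln0.
by rewrite Fn // (leq_trans lt_n2T) // leq_pmulr.
Qed.

Lemma even_2adic k : 0 < k -> ~~ odd k -> exists i b, odd b /\ k = 2 ^ i.+1 * b.
Proof.
move=> k_gt0 even_k; have [b] := pfactor_coprime (isT : prime 2) k_gt0.
rewrite coprime2n mulnC => odd_b def_k; move: even_k.
case: (logn 2 k) def_k => [|i] ->; first by rewrite mul1n odd_b.
by move=> _; exists i, b.
Qed.

Lemma double_odd_mod4 b : odd b -> 2 * b %% 4 = 2.
Proof. by move=> odd_b; have := modn2 b; rewrite odd_b; lia. Qed.

Definition merge_evens n (g : nat -> nat) k :=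
  if odd k then g k
  else if k %% 4 == 2 then \sum_(i < n.+1) 2 ^ i * g (2 ^ i * k) else 0.

Definition split_evens (h : nat -> nat) k :=
  if odd k then h k
  else if k == 0 then 0 else bit (logn 2 k).-1 (h (2 * (k %/ 2 ^ logn 2 k))).

Lemma split_evens_2adic h i b :
  odd b -> split_evens h (2 ^ i.+1 * b) = bit i (h (2 * b)).
Proof.
move=> odd_b; have b_gt0 := odd_gt0 odd_b.
rewrite /split_evens oddM oddX /= muln_eq0 expn_eq0 /= gtn_eqF //.
rewrite lognM ?expn_gt0 // pfactorK // logn_coprime ?coprime2n // addn0.
by rewrite mulKn ?expn_gt0.
Qed.

Lemma merge_evens_supported n g : supported n g -> supported n (merge_evens n g).
Proof.
move=> supp_g k lt_nk; rewrite /merge_evens; case: ifP => _; first exact: supp_g.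
case: ifP => // _; rewrite big1 // => i _.
by rewrite supp_g ?muln0 // (leq_trans lt_nk) // leq_pmull // expn_gt0.
Qed.

Lemma weight_merge_evens n g :
  supported n g -> weight n.+1 (merge_evens n g) = weight n.+1 g.
Proof.
move=> supp_g; have lt_n2 : n < 2 ^ n.+2.
  by apply: (leq_trans (ltn_expl n (isT : 1 < 2))); rewrite leq_exp2l // -addn2 leq_addr.
have weight_2adic f : supported n f -> weight n.+1 f =
    \sum_(i < n.+2) \sum_(j < n.+1) 2 ^ i * j.*2.+1 * f (2 ^ i * j.*2.+1).
  move=> supp_f; rewrite /weight (@sum_2adic (fun k => k * f k) n n.+2 _ _ lt_n2) // => k.
  by move=> /supp_f ->; rewrite muln0.
rewrite !weight_2adic //; last exact: merge_evens_supported.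
rewrite big_ord_recl [X in _ + X]big_ord_recl [in RHS]big_ord_recl /=.
rewrite [X in _ + (_ + X)]big1 ?addn0 => [|i _]; last first.
  apply: big1 => j _; rewrite /bump /= !add1n.
  have -> : 2 ^ i.+2 * j.*2.+1 = 4 * (2 ^ i * j.*2.+1) by rewrite !expnS; lia.
  by rewrite /merge_evens oddM /= modnMr muln0.
congr (_ + _).
  by apply: eq_bigr => j _; rewrite /merge_evens expn0 !mul1n /= odd_double.
rewrite exchange_big /=; apply: eq_bigr => j _.
have odd_j2 : odd j.*2.+1 by rewrite /= odd_double.
rewrite /bump /= expn1 /merge_evens oddM /= double_odd_mod4 // big_distrr /=.
by apply: eq_bigr => i _; rewrite pow2_mul2 add1n expnS; lia.
Qed.

Lemma merge_evensK n h : bounded n h -> no_part_mult4 n h ->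
  merge_evens n (split_evens h) = h.
Proof.
move=> [supp_h le_hn] /(no_part_mult4P supp_h) h4; apply: functional_extensionality => k.
rewrite /merge_evens; case: ifP => odd_k; first by rewrite /split_evens odd_k.
have k2 : k %% 2 = 0 by rewrite modn2 odd_k.
case: ifP => [/eqP k4 | /negbT k4]; last by rewrite h4 // /dvdn; lia.
have [b odd_b def_k] : exists2 b, odd b & k = 2 * b.
  exists (k %/ 2); last by lia.
  have : k %/ 2 %% 2 = 1 by lia.
  by rewrite modn2; case: odd.
rewrite [in RHS]def_k -(@sum_bits n.+1 (h (2 * b))); last first.
  exact: leq_ltn_trans (le_hn _) (ltnW (ltn_expl n.+1 (isT : 1 < 2))).
by apply: eq_bigr => i _; rewrite def_k pow2_mul2 split_evens_2adic.
Qed.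

Lemma split_evens_supported n h : supported n h -> is_partition n h ->
  supported n (split_evens h).
Proof.
move=> supp_h part_h k lt_nk.
case odd_k: (odd k); first by rewrite /split_evens odd_k supp_h.
have [i [b [odd_b def_k]]] := even_2adic (leq_ltn_trans (leq0n n) lt_nk) (negbT odd_k).
rewrite def_k split_evens_2adic // bit_small //.
have b2_gt0 : 0 < 2 * b by rewrite muln_gt0 (odd_gt0 odd_b).
rewrite -(ltn_pmul2l b2_gt0) (leq_ltn_trans (part_weight_le _ supp_h part_h)) //.
by rewrite mulnC pow2_mul2 -def_k.
Qed.

Lemma split_evensK n g : bounded n g -> de_partition n g ->
  split_evens (merge_evens n g) = g.
Proof.
move=> [supp_g _] /andP[/andP[/eqP g0 _] /(distinct_even_partsP supp_g) le_g1].
apply: functional_extensionality => k.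
case odd_k: (odd k); first by rewrite /split_evens /merge_evens odd_k.
case: (posnP k) => [-> // | k_gt0].
have [i [b [odd_b def_k]]] := even_2adic k_gt0 (negbT odd_k).
have le_c1 l : g (2 ^ l.+1 * b) <= 1 by apply: le_g1; rewrite oddM oddX.
rewrite def_k split_evens_2adic // /merge_evens oddM /= double_odd_mod4 // eqxx.
under eq_bigr => l _ do rewrite pow2_mul2.
case: (ltnP i n.+1) => [lt_in | le_ni].
  exact: (bit_binary (c := fun l => g (2 ^ l.+1 * b))).
have lt_n2i : n < 2 ^ i.
  by apply: (leq_trans (ltn_expl n (isT : 1 < 2))); rewrite leq_exp2l // ltnW.
rewrite bit_small ?supp_g //; last first.
  by apply: leq_trans (binary_lt _ le_c1) _; rewrite leq_exp2l.
apply: leq_trans lt_n2i _; rewrite -pow2_mul2 leq_pmulr //.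
by rewrite muln_gt0 (odd_gt0 odd_b).
Qed.

Lemma merge_evens_no4_partition n g : bounded n g -> de_partition n g ->
  no4_partition n (merge_evens n g).
Proof.
move=> [supp_g _] /andP[/andP[_ /eqP wg] _].
have supp_m := merge_evens_supported supp_g.
rewrite /no4_partition /is_partition weight_merge_evens // wg eqxx /=.
apply/(no_part_mult4P supp_m) => k /dvdnP[q ->].
by rewrite /merge_evens mulnC oddM /= modnMr.
Qed.

Lemma split_evens_de_partition n h : bounded n h -> no4_partition n h ->
  de_partition n (split_evens h).
Proof.
move=> bnd_h no4_h; have /andP[part_h h4] := no4_h.
have supp_s := split_evens_supported bnd_h.1 part_h.
rewrite /de_partition /is_partition -weight_merge_evens // merge_evensK //.
case/andP: part_h => _ ->; apply/(distinct_even_partsP supp_s) => k even_k.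
by rewrite /split_evens (negbTE even_k); case: eqP => // _; rewrite -ltnS ltn_mod.
Qed.

Lemma count_de_no4_partition n :
  count_mult n (de_partition n) = count_mult n (no4_partition n).
Proof.
apply: (count_mult_bij (F := merge_evens n) (G := split_evens)).
- move=> g bnd_g de_g; have no4_m := merge_evens_no4_partition bnd_g de_g.
  split=> //; apply: partition_bounded (merge_evens_supported bnd_g.1) _.
  by case/andP: no4_m.
- move=> h bnd_h no4_h; have de_s := split_evens_de_partition bnd_h no4_h.
  split=> //; case/andP: no4_h => part_h _.
  apply: partition_bounded (split_evens_supported bnd_h.1 part_h) _.
  by case/andP: de_s.
- exact: split_evensK.
- by move=> h bnd_h /andP[_]; apply: merge_evensK.
Qed.

Theorem corollary1 (n : nat) : 0 < n -> DE1 n + DE1 n.-1 = p_no4 n.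
Proof.
case: n => [//|p] _; rewrite succnK !DE1E (count_odd_largest_part p).
rewrite p_no4E -count_de_no4_partition.
exact: (count_mult_split _ (de_partition p.+1)).
Qed.
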